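(* Let $n\ge2$, $\preceq$ an admissible order on $L([0,1])$, $G\colon L([0,1])^n\to L([0,1])$ non-decreasing with $G(\mathbf0,\dots,\mathbf0)=\mathbf0$ and $G(\mathbf1,\dots,\mathbf1)=\mathbf1$, and $F\colon L([0,1])^2\to L([0,1])$ non-decreasing in the first variable with $F(\mathbf0,Y)=\mathbf0$ and $F(\mathbf1,Y)=\mathbf1$ for all $Y\in L([0,1])$. Then the IV Sugeno-like $FG$-functional $\mathbf S_m^{F,G}$ is an $n$-dimensional IV aggregation function w.r.t. $\preceq$ for every symmetric IV fuzzy measure $m$.
   Context: $N=\{1,\dots,n\}$. $L([0,1])=\{[a,b]:0\le a\le b\le1\}$, $\mathbf0=[0,0]$, $\mathbf1=[1,1]$. An admissible order $\preceq$ is a total order on $L([0,1])$ with $[a,b]\preceq[c,d]$ whenever $a\le c$, $b\le d$. Monotonicity is w.r.t. $\preceq$. An $n$-dimensional IV aggregation function w.r.t. $\preceq$ is $M\colon L([0,1])^n\to L([0,1])$ with $M(\mathbf0,\dots,\mathbf0)=\mathbf0$, $M(\mathbf1,\dots,\mathbf1)=\mathbf1$, non-decreasing in each component w.r.t. $\preceq$. An IV fuzzy measure w.r.t. $\preceq$ is $m\colon2^N\to L([0,1])$, $m(\emptyset)=\mathbf0$, $m(N)=\mathbf1$, $m(A)\preceq m(B)$ for $A\subseteq B$; symmetric if $m(A)=m(B)$ whenever $|A|=|B|$. For a permutation $\sigma$, $E_{\sigma(i)}=\{\sigma(i),\dots,\sigma(n)\}$. $\mathbf S_m^{F,G}(X_1,\dots,X_n)=G\big(F(X_{\sigma(1)},m(E_{\sigma(1)})),\dots,F(X_{\sigma(n)},m(E_{\sigma(n)}))\big)$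 with $\sigma$ any permutation such that $X_{\sigma(1)}\preceq\dots\preceq X_{\sigma(n)}$ (independent of the choice of $\sigma$ for symmetric $m$). *)

From HB Require Import structures.
From mathcomp Require Import all_boot all_order all_algebra all_fingroup.
From mathcomp Require Import reals.
Set Implicit Arguments. Unset Strict Implicit. Unset Printing Implicit Defensive.
Import Order.TTheory GRing.Theory Num.Theory.
Local Open Scope ring_scope.

(* L([0,1]) : closed subintervals [a,b] of [0,1], represented by (a,b). *)
Definition ivl (R : realType) :=
  {p : R * R | (0 <= p.1) && (p.1 <= p.2) && (p.2 <= 1)}.

Definition lo {R : realType} (X : ivl R) : R := (val X).1.
Definition hi {R : realType} (X : ivl R) : R := (val X).2.

Lemma ivl0_proof (R : realType) :
  (0 <= ((0:R),(0:R)).1) && (((0:R),(0:R)).1 <= ((0:R),(0:R)).2) && (((0:R),(0:R)).2 <= 1).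
Proof. by rewrite /= lexx ler01. Qed.
Lemma ivl1_proof (R : realType) :
  (0 <= ((1:R),(1:R)).1) && (((1:R),(1:R)).1 <= ((1:R),(1:R)).2) && (((1:R),(1:R)).2 <= 1).
Proof. by rewrite /= lexx ler01. Qed.

Definition ivl0 (R : realType) : ivl R := exist _ (0, 0) (ivl0_proof R).
Definition ivl1 (R : realType) : ivl R := exist _ (1, 1) (ivl1_proof R).

Definition admissible (R : realType) (le : rel (ivl R)) : Prop :=
  [/\ reflexive le, antisymmetric le, transitive le, total le &
      forall X Y : ivl R, lo X <= lo Y -> hi X <= hi Y -> le X Y].

Definition upd {R : realType} {n : nat} (X : 'I_n -> ivl R) (i : 'I_n) (Y : ivl R)
  : 'I_n -> ivl R := fun j => if j == i then Y else X j.

Definition nondecr_each (R : realType) (n : nat) (le : rel (ivl R))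
  (M : ('I_n -> ivl R) -> ivl R) : Prop :=
  forall (X : 'I_n -> ivl R) (i : 'I_n) (Y : ivl R),
    le (X i) Y -> le (M X) (M (upd X i Y)).

Definition IV_aggregation (R : realType) (n : nat) (le : rel (ivl R))
  (M : ('I_n -> ivl R) -> ivl R) : Prop :=
  [/\ M (fun _ => ivl0 R) = ivl0 R, M (fun _ => ivl1 R) = ivl1 R &
      nondecr_each le M].

Definition IV_fuzzy_measure (R : realType) (n : nat) (le : rel (ivl R))
  (m : {set 'I_n} -> ivl R) : Prop :=
  [/\ m set0 = ivl0 R, m setT = ivl1 R &
      forall A B : {set 'I_n}, A \subset B -> le (m A) (m B)].

Definition symmetric_measure (R : realType) (n : nat) (m : {set 'I_n} -> ivl R) : Prop :=
  forall A B : {set 'I_n}, #|A| = #|B| -> m A = m B.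

Definition Eset (n : nat) (s : {perm 'I_n}) (i : 'I_n) : {set 'I_n} :=
  [set s j | j in [pred j : 'I_n | (i <= j)%N]].

Definition sorting (R : realType) (n : nat) (le : rel (ivl R))
  (X : 'I_n -> ivl R) (s : {perm 'I_n}) : bool :=
  [forall i : 'I_n, forall j : 'I_n, (i <= j)%N ==> le (X (s i)) (X (s j))].

(* IV Sugeno-like FG-functional; computed with some sorting permutation
   (one always exists when le is total; the value is independent of the
   choice for symmetric m). *)
Definition sugenoFG (R : realType) (n : nat) (le : rel (ivl R))
  (m : {set 'I_n} -> ivl R) (F : ivl R -> ivl R -> ivl R)
  (G : ('I_n -> ivl R) -> ivl R) (X : 'I_n -> ivl R) : ivl R :=
  match [pick s : {perm 'I_n} | sorting le X s] with
  | Some s => G (fun i => F (X (s i)) (m (Eset s i)))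
  | None => ivl0 R
  end.

From HB Require Import structures.
From mathcomp Require Import all_boot all_order all_algebra all_fingroup.
From mathcomp Require Import reals.
From mathcomp Require Import boolp.
Import Order.TTheory GRing.Theory Num.Theory.
Local Open Scope ring_scope.
Set Implicit Arguments. Unset Strict Implicit.

(* Since the order is total, every input has a sorting permutation s, and
   for symmetric m the weight m (E_{s i}) depends only on the position i.
   Moreover the i-th smallest entry is monotone under a pointwise increase of
   the input, so S_m^{F,G} is G applied to monotone functions of the input,
   hence monotone; the boundary values come from F(0,-) = 0 and F(1,-) = 1. *)

Lemma sorting_perm_exists (T : Type) (r : rel T) (n : nat) (f : 'I_n -> T) :
  reflexive r -> transitive r -> total r ->
  exists s : {perm 'I_n}, forall i j : 'I_n, (i <= j)%N -> r (f (s i)) (f (s j)).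
Proof.
move=> r_refl r_trans r_total.
pose rf := [rel i j : 'I_n | r (f i) (f j)].
have rf_refl : reflexive rf by move=> ?; apply: r_refl.
have rf_trans : transitive rf by move=> ? ? ? /=; apply: r_trans.
pose t := sort rf (enum 'I_n).
have t_perm : perm_eq t (enum 'I_n) by apply/permPl/perm_sort.
have t_size : size t = n by rewrite (perm_size t_perm) size_enum_ord.
have t_uniq : uniq t by rewrite (perm_uniq t_perm) enum_uniq.
have t_sorted : sorted rf t by apply/sort_sorted => i j; apply: r_total.
have nth_t (i j : 'I_n) : nth i t i = nth j t i.
  by apply: set_nth_default; rewrite t_size.
have nth_t_inj : injective (fun i : 'I_n => nth i t i).
  move=> i j /= eq_ij; apply/val_inj/eqP.
  by rewrite -(nth_uniq i _ _ t_uniq) ?t_size //= eq_ij -nth_t.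
exists (perm nth_t_inj) => i j le_ij; rewrite !permE (nth_t i j).
by apply: (sorted_leq_nth rf_trans rf_refl) => //; rewrite inE t_size.
Qed.

Section Sorting.
Variables (R : realType) (n : nat) (le : rel (ivl R)).
Hypotheses (refl_le : reflexive le) (anti_le : antisymmetric le).
Hypotheses (trans_le : transitive le) (total_le : total le).

Lemma sortingP (X : 'I_n -> ivl R) (s : {perm 'I_n}) :
  reflect (forall i j : 'I_n, (i <= j)%N -> le (X (s i)) (X (s j)))
          (sorting le X s).
Proof.
apply: (iffP forallP) => [sX i j | sX i]; first exact: implyP (forallP (sX i) j).
by apply/forallP => j; apply/implyP/sX.
Qed.

Lemma sorting_exists (X : 'I_n -> ivl R) : exists s, sorting le X s.
Proof.
have [s sX] := sorting_perm_exists X refl_le trans_le total_le.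
by exists s; apply/sortingP.
Qed.

(* The k+1 indices s' 0, ..., s' k cannot all lie among the k indices
   s 0, ..., s (k-1); an index outside witnesses the inequality. *)
Lemma sorting_homo (X X' : 'I_n -> ivl R) (s s' : {perm 'I_n}) :
  sorting le X s -> sorting le X' s' -> (forall i, le (X i) (X' i)) ->
  forall k, le (X (s k)) (X' (s' k)).
Proof.
move=> /sortingP sX /sortingP sX' le_XX' k.
pose A := [set s' j | j in [pred j : 'I_n | (j <= k)%N]].
pose B := [set s j | j in [pred j : 'I_n | (j < k)%N]].
have card_BA : (#|B| < #|A|)%N.
  rewrite !card_imset; try exact: perm_inj.
  apply/proper_card/properP; split.
    by apply/subsetP => j; rewrite !inE => /ltnW.
  by exists k; rewrite !inE ?leqnn ?ltnn.
have /subsetPn[_ /imsetP[j jk ->] s'j_notin_B] : ~~ (A \subset B).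
  by apply/negP => /subset_leq_card; rewrite leqNgt card_BA.
have k_le : (k <= (s^-1)%g (s' j))%N.
  rewrite leqNgt; apply: contra s'j_notin_B => lt_k.
  by apply/imsetP; exists ((s^-1)%g (s' j)); rewrite ?inE ?permKV.
have := sX _ _ k_le; rewrite permKV => le_k.
by apply: trans_le le_k (trans_le (le_XX' _) (sX' _ _ jk)).
Qed.

Lemma sorting_eq (X : 'I_n -> ivl R) (s s' : {perm 'I_n}) :
  sorting le X s -> sorting le X s' -> forall k, X (s k) = X (s' k).
Proof.
move=> sX sX' k; apply: anti_le.
by rewrite !(@sorting_homo X X) // => i.
Qed.

Lemma card_Eset (s s' : {perm 'I_n}) (k : 'I_n) : #|Eset s k| = #|Eset s' k|.
Proof. by rewrite !card_imset //; apply: perm_inj. Qed.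

Lemma sugenoFG_sorting (m : {set 'I_n} -> ivl R) F G X s :
  symmetric_measure m -> sorting le X s ->
  sugenoFG le m F G X = G (fun i => F (X (s i)) (m (Eset s i))).
Proof.
move=> m_sym sX; rewrite /sugenoFG.
case: pickP => [s' sX' | /(_ s)]; last by rewrite sX.
congr G; apply: funext => k.
by rewrite (sorting_eq sX' sX) (m_sym _ _ (card_Eset s' s k)).
Qed.

Lemma sugenoFG_const (m : {set 'I_n} -> ivl R) F G (c : ivl R) :
  symmetric_measure m -> (forall Y, F c Y = c) -> G (fun _ => c) = c ->
  sugenoFG le m F G (fun _ => c) = c.
Proof.
move=> m_sym Fc Gc; have [s sc] := sorting_exists (fun _ => c).
rewrite (sugenoFG_sorting _ _ m_sym sc) -[RHS]Gc; congr G.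
by apply: funext => i; rewrite Fc.
Qed.

Lemma nondecr_each_homo (G : ('I_n -> ivl R) -> ivl R) :
  nondecr_each le G ->
  forall U V, (forall i, le (U i) (V i)) -> le (G U) (G V).
Proof.
move=> G_mono U V le_UV.
pose W k := fun i : 'I_n => if (i < k)%N then V i else U i.
have W_step k (lt_kn : (k < n)%N) :
    W k.+1 = upd (W k) (Ordinal lt_kn) (V (Ordinal lt_kn)).
  apply: funext => i; rewrite /W /upd ltnS leq_eqVlt.
  case: (i =P Ordinal lt_kn) => [-> | ne_ik] /=; first by rewrite eqxx.
  rewrite (_ : i == k :> nat = false) //.
  by apply/eqP => eq_ik; apply/ne_ik/val_inj.
have le_GW k : (k <= n)%N -> le (G U) (G (W k)).
  elim: k => [_ | k IHk lt_kn].
    by have -> : W 0%N = U by apply: funext.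
  rewrite (W_step k lt_kn); apply: trans_le (IHk (ltnW lt_kn)) (G_mono _ _ _ _).
  by rewrite /W ltnn; apply: le_UV.
have -> : V = W n by apply: funext => i; rewrite /W ltn_ord.
exact: le_GW.
Qed.

End Sorting.

Theorem corollary7 (R : realType) (n : nat) (le : rel (ivl R))
  (G : ('I_n -> ivl R) -> ivl R) (F : ivl R -> ivl R -> ivl R) :
  (2 <= n)%N ->
  admissible le ->
  nondecr_each le G ->
  G (fun _ => ivl0 R) = ivl0 R ->
  G (fun _ => ivl1 R) = ivl1 R ->
  (forall X X' Y : ivl R, le X X' -> le (F X Y) (F X' Y)) ->
  (forall Y : ivl R, F (ivl0 R) Y = ivl0 R) ->
  (forall Y : ivl R, F (ivl1 R) Y = ivl1 R) ->
  forall m : {set 'I_n} -> ivl R,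
    IV_fuzzy_measure le m -> symmetric_measure m ->
    IV_aggregation le (sugenoFG le m F G).
Proof.
move=> _ [refl_le anti_le trans_le total_le _] G_mono G0 G1 F_mono F0 F1 m _ m_sym.
split; [exact: sugenoFG_const | exact: sugenoFG_const |].
move=> X i Y le_XiY.
have [s sX] := sorting_exists refl_le trans_le total_le X.
have [s' sXY] := sorting_exists refl_le trans_le total_le (upd X i Y).
rewrite (sugenoFG_sorting refl_le anti_le trans_le _ _ m_sym sX)
        (sugenoFG_sorting refl_le anti_le trans_le _ _ m_sym sXY).
apply: (nondecr_each_homo refl_le trans_le G_mono) => k.
rewrite (m_sym _ _ (card_Eset s s' k)); apply/F_mono.
apply: (sorting_homo trans_le sX sXY) => j.
by rewrite /upd; case: eqP => [-> | _].
Qed.
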